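(* Let $D$ be a locatable digraph of order $n$, and let $D'$ be the spanning subdigraph of $D$ whose arcs are exactly the forcing arcs of $D$. Then $\gamma_{OL}(D)=n$ if and only if $D'$ is a disjoint union of directed cycles covering all vertices of $D$ (i.e. every vertex of $D$ lies on exactly one of these cycles, and the arcs of $D'$ are exactly the arcs of these cycles).
   Context: Digraphs are finite and may contain loops; between two distinct vertices there may be arcs in one or both directions, no repeated arcs. A directed cycle may have length 1 (a loop) or 2 (arcs $uv$ and $vu$). $N^-(v)=\{u: uv\text{ is an arc}\}$ (contains $v$ iff $v$ has a loop). An OLD set of $D$ is a set $S\subseteq V(D)$ such that every vertex has an in-neighbour in $S$ and for every two distinct vertices $u,w$ some vertex of $S$ lies in exactly one of $N^-(u),N^-(w)$. $D$ is locatable if it has an OLD set, and then $\gamma_{OL}(D)$ is the minimum size of an OLD set. An arc $xy$ (possibly a loop) of $D$ is a forcing arc if either $N^-(y)=\{x\}$, or there is a vertex $z$ with $N^-(z)=N^-(y)\setminus\{x\}$. *)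

(* A digraph on a finite vertex type T is an arc relation
   e : rel T ("e u v" means the arc uv exists); loops (e v v) are allowed,
   arcs in both directions are allowed, repeated arcs cannot occur. *)
From mathcomp Require Import all_boot all_order all_fingroup.
Set Implicit Arguments.
Unset Strict Implicit.
Unset Printing Implicit Defensive.

Section Digraph.
Variable T : finType.
Variable e : rel T.

Definition inN (v : T) : {set T} := [set u | e u v].

Definition OLD (S : {set T}) : bool :=
  [forall v : T, exists u in S, u \in inN v] &&
  [forall u : T, forall w : T, (u != w) ==>
     [exists x in S, (x \in inN u) != (x \in inN w)]].

Definition locatable : Prop := exists S : {set T}, OLD S.

(* gamma_OL: minimum size of an OLD set (default #|T|.+1 if none exists;
   only used under the locatability hypothesis). *)
Definition gammaOL : nat :=
  \big[minn/#|T|.+1]_(S : {set T} | OLD S) #|S|.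

Definition forcing (x y : T) : bool :=
  e x y &&
  ((inN y == [set x]) || [exists z, inN z == inN y :\ x]).

End Digraph.

From mathcomp Require Import all_boot all_order all_fingroup.
From mathcomp Require Import zify.

(* Let F consist of the empty set and the in-neighbourhoods N^-(v); when V(D)
   is an OLD set these are n + 1 distinct sets.  An arc xy is forcing exactly
   when x splits F at N^-(y), i.e. N^-(y) \ x is again in F, and V(D) \ x is
   an OLD set exactly when no forcing arc leaves x; hence gamma_OL(D) = n iff
   every vertex splits F.  Deleting a splitting point from the ground set
   strictly lowers the number of traces of F, so when all n points split, F
   has exactly |A| + 1 traces on every A.  This rigidity lets each x split F
   at a single set only and forbids two points to split F at the same set, so
   the forcing arcs form the graph of a permutation. *)

Set Implicit Arguments.
Unset Strict Implicit.
Unset Printing Implicit Defensive.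

Lemma card_imset_ltn (aT rT : finType) (f : aT -> rT) (D : {set aT}) a b :
  a \in D -> b \in D -> a != b -> f a = f b -> #|f @: D| < #|D|.
Proof.
move=> aD bD neq_ab fab; rewrite ltn_neqAle leq_imset_card andbT.
by apply/negP => /imset_injP inj_f; case/eqP: neq_ab; apply: inj_f.
Qed.

Lemma imset_setD1 (aT rT : finType) (f : aT -> rT) (D : {set aT}) a b :
  a \in D -> a != b -> f a = f b -> f @: (D :\ b) = f @: D.
Proof.
move=> aD neq_ab fab; apply/eqP; rewrite eqEsubset imsetS ?subD1set //=.
apply/subsetP => _ /imsetP[c cD ->]; case: (eqVneq c b) => [->|neq_cb].
  by rewrite -fab imset_f // !inE neq_ab.
by rewrite imset_f // !inE neq_cb.
Qed.

Lemma bigmin_le (I : eqType) (r : seq I) (F : I -> nat) m i :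
  i \in r -> \big[minn/m]_(j <- r) F j <= F i.
Proof.
elim: r => //= j r IH; rewrite big_cons in_cons => /predU1P[<-|/IH].
  exact: geq_minl.
exact: leq_trans (geq_minr _ _).
Qed.

Section Traces.
Variable T : finType.
Implicit Types (F : {set {set T}}) (A B : {set T}) (x : T).

Definition trace F A : {set {set T}} := [set B :&: A | B in F].

Definition splits F x : bool := [exists B in F, (x \in B) && (B :\ x \in F)].

Lemma trace_setT F : trace F setT = F.
Proof. by rewrite /trace (eq_imset (g := id)) ?imset_id // => B; rewrite setIT. Qed.

Lemma trace_set0 F : F != set0 -> trace F set0 = [set set0].
Proof.
case/set0Pn => B BF; apply/setP => C; rewrite inE.
apply/imsetP/eqP => [[B' _ ->] | ->]; first by rewrite setI0.
by exists B; rewrite ?setI0.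
Qed.

Lemma trace_setD1 F A x : trace F (A :\ x) = [set C :\ x | C in trace F A].
Proof. by rewrite /trace -imset_comp; apply: eq_imset => B; rewrite /= setIDA. Qed.

Lemma card_trace_setD1 F A x :
  x \in A -> splits F x -> #|trace F (A :\ x)| < #|trace F A|.
Proof.
move=> xA /existsP[B /and3P[BF xB BxF]]; rewrite trace_setD1.
apply: (@card_imset_ltn _ _ _ _ (B :&: A) ((B :\ x) :&: A)).
- exact: imset_f.
- exact: imset_f.
- by apply/eqP => /setP/(_ x); rewrite !inE eqxx xB xA.
- by apply/setP => y; rewrite !inE; case: (y == x).
Qed.

Lemma card_trace_grow F A B : A \subset B -> {in B :\: A, forall x, splits F x} ->
  #|trace F A| + #|B :\: A| <= #|trace F B|.
Proof.
move kE : #|B :\: A| => k; elim: k B kE => [|k IH] B kE sAB splitsBA.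
  have : B :\: A == set0 by rewrite -cards_eq0 kE.
  rewrite setD_eq0 => sBA; suff -> : B = A by rewrite addn0.
  by apply/eqP; rewrite eqEsubset sBA.
have [x xBA] : exists x, x \in B :\: A by apply/set0Pn; rewrite -cards_eq0 kE.
have [xA xB] : x \notin A /\ x \in B by apply/andP; rewrite -in_setD.
have BxA : (B :\ x) :\: A = (B :\: A) :\ x by rewrite !setDDl setUC.
have card_BxA : #|(B :\ x) :\: A| = k.
  by move: kE; rewrite BxA (cardsD1 x) xBA add1n => -[].
have sABx : A \subset B :\ x by rewrite subsetD1 sAB xA.
have splitsBxA : {in (B :\ x) :\: A, forall y, splits F y}.
  by move=> y; rewrite BxA => /setD1P[_]; apply: splitsBA.
have := IH _ card_BxA sABx splitsBxA.
have := card_trace_setD1 xB (splitsBA x xBA).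
lia.
Qed.

End Traces.

Section TightFamily.
Variables (T : finType) (F : {set {set T}}).
Hypothesis card_F : #|F| = #|T|.+1.
Hypothesis splitsF : forall x, splits F x.

Lemma card_trace_tight A : #|trace F A| = #|A|.+1.
Proof.
have F0 : F != set0 by rewrite -card_gt0 card_F.
have := card_trace_grow (sub0set A) (fun x _ => splitsF x).
have := card_trace_grow (subsetT A) (fun x _ => splitsF x).
rewrite trace_set0 // cards1 setD0 trace_setT setTD card_F.
have := cardsC A; lia.
Qed.

(* On the complement of x tightness leaves room for a single pair B, B \ x
   that merges when x is deleted. *)
Lemma tight_split_set_uniq x B1 B2 :
  B1 \in F -> B2 \in F -> x \in B1 -> x \in B2 ->
  B1 :\ x \in F -> B2 :\ x \in F -> B1 = B2.
Proof.
move=> B1F B2F xB1 xB2 C1F C2F; apply/eqP/negPn/negP => neqB.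
have neq_x (B C : {set T}) : x \in B -> x \notin C -> B != C.
  by move=> xB; apply: contraNneq => <-.
have xD1 (B : {set T}) : x \notin B :\ x by rewrite setD11.
pose f B : {set T} := B :\ x.
have fD1 (B : {set T}) : f (B :\ x) = f B.
  by apply/setP => y; rewrite !inE; case: (y == x).
set G := F :\ (B1 :\ x).
have card_G : #|G| = #|T|.
  by have := cardsD1 (B1 :\ x) F; rewrite C1F card_F add1n => -[].
have fF : f @: G = f @: F.
  exact: imset_setD1 B1F (neq_x _ _ xB1 (xD1 B1)) (esym (fD1 B1)).
have C21 : B2 :\ x != B1 :\ x.
  by apply: contra_neq neqB => E; rewrite -(setD1K xB1) -(setD1K xB2) E.
have B2_in : B2 \in G by rewrite in_setD1 neq_x ?xD1.
have C2_in : B2 :\ x \in G by rewrite in_setD1 C21 C2F.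
have := card_imset_ltn B2_in C2_in (neq_x _ _ xB2 (xD1 B2)) (esym (fD1 B2)).
have trE : trace F [set~ x] = f @: F by apply: eq_imset => B; rewrite -setDE.
have nT : 0 < #|T| by apply/card_gt0P; exists x.
by rewrite fF -trE card_trace_tight cardsC1 prednK // card_G ltnn.
Qed.

(* The traces of B, B \ x2, B \ x1 and set0 on [set x1; x2] are its four
   subsets, one more than tightness allows. *)
Lemma tight_split_point_uniq B x1 x2 : set0 \in F -> B \in F ->
  x1 \in B -> x2 \in B -> B :\ x1 \in F -> B :\ x2 \in F -> x1 = x2.
Proof.
move=> F0 BF x1B x2B B1F B2F; apply/eqP/negPn/negP => neq12.
pose profile (C : {set T}) : bool * bool := (x1 \in C, x2 \in C).
have all_profiles : [set: bool * bool] \subset profile @: trace F [set x1; x2].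
  apply/subsetP => -[b1 b2] _.
  have [B' B'F profB'] : exists2 B', B' \in F & (x1 \in B', x2 \in B') = (b1, b2).
    case: b1; case: b2;
      [exists B | exists (B :\ x2) | exists (B :\ x1) | exists set0] => //;
      by rewrite ?inE ?eqxx ?x1B ?x2B ?(negbTE neq12) // eq_sym (negbTE neq12).
  apply/imsetP; exists (B' :&: [set x1; x2]); first exact: imset_f.
  by rewrite -profB' /profile !inE !eqxx !orbT !andbT.
have := subset_leq_card all_profiles; rewrite cardsT card_prod card_bool.
have := leq_imset_card profile (trace F [set x1; x2]).
by rewrite card_trace_tight cards2 neq12 => le3 /leq_trans/(_ le3).
Qed.

End TightFamily.

Section ForcingArcs.
Variables (T : finType) (e : rel T).
Implicit Types (S : {set T}) (u v w x y : T).

Lemma OLDP S :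
  reflect ((forall v, inN e v :&: S != set0) /\ injective (fun v => inN e v :&: S))
          (OLD e S).
Proof.
apply: (iffP andP) => [[/forallP dom /forallP sep] | [dom sep]]; split.
- move=> v; have /exists_inP[u uS uv] := dom v.
  by apply/set0Pn; exists u; rewrite inE uv uS.
- move=> u w /setP E; apply/eqP/negPn/negP => /(implyP (forallP (sep u) w)).
  by case/exists_inP => y yS; have := E y; rewrite !inE yS !andbT => ->; rewrite eqxx.
- apply/forallP => v; have /set0Pn[u] := dom v.
  by rewrite inE => /andP[uv uS]; apply/exists_inP; exists u.
- apply/forallP => u; apply/forallP => w; apply/implyP => neq_uw.
  apply: contraNT neq_uw => /exists_inPn nosep; apply/eqP/sep/setP => y.
  rewrite !inE; case: (boolP (y \in S)) => yS; rewrite ?andbF ?andbT //.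
  by have := nosep y yS; rewrite negbK !inE => /eqP.
Qed.

Lemma OLD_subset S S' : S \subset S' -> OLD e S -> OLD e S'.
Proof.
move=> sSS' /OLDP[dom inj]; apply/OLDP; split => [v | u w /= E].
  have /set0Pn[u] := dom v; rewrite inE => /andP[uv uS].
  by apply/set0Pn; exists u; rewrite inE uv (subsetP sSS').
by apply: inj => /=; rewrite -(setIidPr sSS') !setIA E.
Qed.

Lemma inN_neq0 v : OLD e setT -> inN e v != set0.
Proof. by case/OLDP => dom _; rewrite -[inN e v]setIT dom. Qed.

Lemma inN_inj : OLD e setT -> injective (inN e).
Proof. by case/OLDP => _ inj u w E; apply: inj; rewrite /= E. Qed.

Lemma gammaOL_le S : OLD e S -> gammaOL e <= #|S|.
Proof.
by move=> oldS; rewrite /gammaOL -big_filter bigmin_le // mem_filter oldS mem_index_enum.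
Qed.

Lemma gammaOL_eq_card : OLD e setT -> gammaOL e = #|T| <-> forall x, ~~ OLD e [set~ x].
Proof.
move=> oldT; split => [gammaE x | noC1].
  apply/negP => /gammaOL_le; rewrite gammaE cardsC1.
  have : 0 < #|T| by apply/card_gt0P; exists x.
  lia.
apply/eqP; rewrite eqn_leq -{1}cardsT gammaOL_le //=.
apply: (big_ind (fun m => #|T| <= m)) => // [m1 m2 | S oldS].
  by rewrite leq_min => ->.
rewrite -cardsT subset_leq_card //; apply/subsetP => x _; apply: contraT => xS.
by case/negP: (noC1 x); apply: OLD_subset oldS; rewrite subsetC sub1set inE.
Qed.

(* set0 accounts for the forcing arcs xy with N^-(y) = {x}. *)
Definition nbhds : {set {set T}} := set0 |: [set inN e v | v in T].

Lemma forcingE x y : forcing e x y = e x y && (inN e y :\ x \in nbhds).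
Proof.
rewrite /forcing /nbhds in_setU1; case: (boolP (e x y)) => //= exy; congr (_ || _).
  have Ny0 : inN e y != set0 by apply/set0Pn; exists x; rewrite inE.
  by rewrite setD_eq0 subset1 (negbTE Ny0) orbF.
by apply/existsP/imsetP => [[z /eqP <-] | [z _ ->]]; exists z.
Qed.

Lemma forcing_nbhds x y : forcing e x y ->
  [/\ inN e y \in nbhds, x \in inN e y & inN e y :\ x \in nbhds].
Proof.
by rewrite forcingE => /andP[exy ->]; rewrite /nbhds in_setU1 imset_f ?orbT // inE.
Qed.

Lemma forcing_splits x y : forcing e x y -> splits nbhds x.
Proof.
case/forcing_nbhds => Ny xNy Nyx; apply/exists_inP; exists (inN e y) => //.
exact/andP.
Qed.

Lemma card_nbhds : OLD e setT -> #|nbhds| = #|T|.+1.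
Proof.
move=> oldT; rewrite cardsU1 card_imset; last exact: inN_inj.
suff -> : set0 \notin [set inN e v | v in T] by [].
by apply/imsetP => -[v _ /esym/eqP]; apply/negP/inN_neq0.
Qed.

Lemma OLD_setC1E x : OLD e setT -> OLD e [set~ x] = ~~ [exists y, forcing e x y].
Proof.
move=> oldT; have injN := inN_inj oldT.
have NDx v : inN e v :&: [set~ x] = inN e v :\ x by rewrite setDE.
have NDx_id v : ~~ e x v -> inN e v :\ x = inN e v.
  move=> nxv; apply/setP => y; rewrite !inE.
  by case: eqVneq => // ->; rewrite (negbTE nxv).
apply/idP/existsPn => [/OLDP[dom inj] y | noforce].
  rewrite forcingE in_setU1; apply/negP => /andP[exy /orP[/eqP Nyx0 | /imsetP[z _ Nyx]]].
    by move: (dom y); rewrite NDx Nyx0 eqxx.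
  have nxz : ~~ e x z by have := setD11 x (inN e y); rewrite Nyx inE => ->.
  have/inj zy : inN e z :&: [set~ x] = inN e y :&: [set~ x] by rewrite !NDx Nyx NDx_id.
  by move: nxz; rewrite zy exy.
have forced u w : inN e u :\ x = inN e w :\ x -> e x u -> e x w.
  move=> E xu; apply: contraNT (noforce u) => nxw.
  by rewrite forcingE xu E NDx_id // in_setU1 imset_f ?orbT.
apply/OLDP; split => [v | u w /=]; rewrite !NDx.
  apply: contraNneq (noforce v) => Nvx0; rewrite forcingE Nvx0 in_setU1 eqxx andbT.
  by apply: contraT => nxv; move: (inN_neq0 v oldT); rewrite -NDx_id // Nvx0 eqxx.
move=> E; have xuw : e x u = e x w by apply/idP/idP; apply: forced.
apply/injN/setP => y; move/setP/(_ y): E; rewrite !inE.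
by case: eqVneq => [->|].
Qed.

Lemma forcing_perm : OLD e setT -> (forall x, exists y, forcing e x y) ->
  exists s : {perm T}, forall x y, forcing e x y = (y == s x).
Proof.
move=> oldT /fin_all_exists[f forcing_f].
have card_F := card_nbhds oldT.
have splitsF x := forcing_splits (forcing_f x).
have set0_nbhds : set0 \in nbhds by rewrite setU11.
have inj_f : injective f.
  move=> x1 x2 f12; have [Nin x1N Nx1] := forcing_nbhds (forcing_f x1).
  have [_ x2N Nx2] := forcing_nbhds (forcing_f x2); rewrite -f12 in x2N Nx2.
  exact: (tight_split_point_uniq card_F splitsF set0_nbhds Nin x1N x2N Nx1 Nx2).
exists (perm inj_f) => x y; rewrite permE.
apply/idP/eqP => [xy | ->]; last exact: forcing_f.
have [N1 xN1 N1x] := forcing_nbhds xy.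
have [N2 xN2 N2x] := forcing_nbhds (forcing_f x).
exact/(inN_inj oldT)/(tight_split_set_uniq card_F splitsF N1 N2 xN1 xN2 N1x N2x).
Qed.

End ForcingArcs.

Theorem theorem12 (T : finType) (e : rel T) :
  locatable e ->
  (gammaOL e = #|T| <->
   exists s : {perm T}, forall x y : T, forcing e x y = (y == s x)).
Proof.
move=> [S oldS]; have oldT : OLD e setT := OLD_subset (subsetT S) oldS.
rewrite gammaOL_eq_card //; split => [noC1 | [s forcing_s] x].
  apply: forcing_perm => // x; apply/existsP.
  by have := noC1 x; rewrite OLD_setC1E // negbK.
by rewrite OLD_setC1E // negbK; apply/existsP; exists (s x); rewrite forcing_s.
Qed.
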